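(* Consider the setting described in the context (decentralized affine nonlinear system, loop $j$, controller $K_{i,j}$ with $A_{jj}-B_{jj}K_{i,j}$ Hurwitz, sample times $t_0<\dots<t_l$, data trajectories, and a block-diagonal state transformation $S=\mathrm{diag}(S_1,\dots,S_N)$ with $S_j\in\mathrm{GL}(n_j)$). Let $\mathbf{A}_{i,j},\mathbf{b}_{i,j}$ be the dEIRL regression matrix and vector and $\tilde{\mathbf{A}}_{i,j},\tilde{\mathbf{b}}_{i,j}$ the MEE (modulated) regression matrix and vector. Then $P_{i,j}\in\mathbb{S}^{n_j}$, $P_{i,j}>0$, satisfies the dEIRL regression $\mathbf{A}_{i,j}\operatorname{svec}(P_{i,j})=\mathbf{b}_{i,j}$ if and only if $\tilde P_{i,j}=S_j^{-T}P_{i,j}S_j^{-1}$ satisfies the MEE regression $\tilde{\mathbf{A}}_{i,j}\operatorname{svec}(\tilde P_{i,j})=\tilde{\mathbf{b}}_{i,j}$. Furthermore, $$\tilde{\mathbf{A}}_{i,j}=\mathbf{A}_{i,j}(S_j\,\underline{\otimes}\, S_j)^T,\qquad \tilde{\mathbf{b}}_{i,j}=\mathbf{b}_{i,j}.$$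
   Context: Symmetric Kronecker algebra: for $k\in\mathbb{N}$ let $\underline{k}=k(k+1)/2$, $\mathbb{S}^k$ the real symmetric $k\times k$ matrices, $\operatorname{vec}$ column-stacking, $\otimes$ the Kronecker product, $e_1,\dots,e_k$ the standard basis. Enumerate pairs $(r,c)$, $1\le r\le c\le k$, in the order $(1,1),\dots,(1,k),(2,2),\dots,(2,k),\dots,(k,k)$ as $(r(\ell),c(\ell))$; set $E_\ell=e_{r(\ell)}e_{r(\ell)}^T$ if $r(\ell)=c(\ell)$, $E_\ell=\frac{\sqrt2}{2}(e_{r(\ell)}e_{c(\ell)}^T+e_{c(\ell)}e_{r(\ell)}^T)$ otherwise; $W_k\in\mathbb{R}^{\underline{k}\times k^2}$ has $\ell$-th row $\operatorname{vec}(E_\ell)^T$. For $A,B\in\mathbb{R}^{p\times q}$, $A\,\underline{\otimes}\, B = W_p(A\otimes B)W_q^T$ (for row vectors $a^T,b^T$, $a,b\in\mathbb{R}^q$: $a^T\,\underline{\otimes}\, b^T=(a\otimes b)^TW_q^T$). $\operatorname{svec}(P)=W_k\operatorname{vec}(P)$ for $P\in\mathbb{S}^k$. For $t_0<\dots<t_l$ and $x,y:[t_0,t_l]\to\mathbb{R}^k$: $\delta_{x,y}\in\mathbb{R}^{l\times\underline{k}}$ has $k'$-th row $(x(t_{k'})+y(t_{k'-1}))^T\,\underline{\otimes}\,(x(t_{k'})-y(t_{k'-1}))^T$, and for square-integrable $x,y$, $I_{x,y}\in\mathbb{R}^{l\times\underline{k}}$ has $k'$-th row $\int_{t_{k'-1}}^{t_{k'}}x^T\,\underline{\otimes}\,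 y^T\,d\tau$. System: $\dot x=f(x)+g(x)u$, $x\in\mathbb{R}^n$, $u\in\mathbb{R}^m$, with $f(0)=0$, $f,g$ Lipschitz on a compact set containing the origin in its interior, and state partitioned into $N$ loops $x=(x_1,\dots,x_N)$, $x_j\in\mathbb{R}^{n_j}$, $u=(u_1,\dots,u_N)$, $u_j\in\mathbb{R}^{m_j}$, so that $\dot x_j=f_j(x)+g_j(x)u$ with $g_j(x)\in\mathbb{R}^{n_j\times m}$. $(A,B)$ is the linearization at $0$, with diagonal blocks $A_{jj}\in\mathbb{R}^{n_j\times n_j}$, $B_{jj}\in\mathbb{R}^{n_j\times m_j}$. Cost matrices $Q_j\in\mathbb{S}^{n_j}$, $Q_j\ge0$, $R_j\in\mathbb{S}^{m_j}$, $R_j>0$. Fix loop $j$ and $K_{i,j}\in\mathbb{R}^{m_j\times n_j}$ with $A_{jj}-B_{jj}K_{i,j}$ Hurwitz, and put $Q_{i,j}=Q_j+K_{i,j}^TR_jK_{i,j}$. Let $x(\cdot),u(\cdot)$ be a (square-integrable) state-input trajectory on $[t_0,t_l]$ and $w_j=f_j(x)-A_{jj}x_j$. The dEIRL regression is $\mathbf{A}_{i,j}=\delta_{x_j,x_j}-2\big[I_{x_j,x_j}(I_{n_j}\,\underline{\otimes}\, B_{jj}K_{i,j})^T+I_{x_j,g_j(x)u}+I_{x_j,w_j}\big]\in\mathbb{R}^{l\times\underline{n}_j}$, $\mathbf{b}_{i,j}=-I_{x_j,x_j}\operatorname{svec}(Q_{i,j})$. Modulation: $S=\mathrm{diag}(S_1,\dots,S_N)$,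 $S_j\in\mathrm{GL}(n_j)$, $\tilde x=Sx$, $\tilde x_j=S_jx_j$; $\tilde f_j=S_j\circ f_j\circ S^{-1}$, $\tilde g_j=S_j\circ g_j\circ S^{-1}$, $\tilde A_{jj}=S_jA_{jj}S_j^{-1}$, $\tilde B_{jj}=S_jB_{jj}$, $\tilde Q_j=S_j^{-T}Q_jS_j^{-1}$, $\tilde K_{i,j}=K_{i,j}S_j^{-1}$, $\tilde Q_{i,j}=\tilde Q_j+\tilde K_{i,j}^TR_j\tilde K_{i,j}$, $\tilde w_j=\tilde f_j(\tilde x)-\tilde A_{jj}\tilde x_j$. The MEE regression $(\tilde{\mathbf{A}}_{i,j},\tilde{\mathbf{b}}_{i,j})$ is defined by the same formulas as $(\mathbf{A}_{i,j},\mathbf{b}_{i,j})$ with every quantity replaced by its tilded counterpart (data $\tilde x_j$, $\tilde g_j(\tilde x)u$, $\tilde w_j$, $\tilde B_{jj}\tilde K_{i,j}$, $\tilde Q_{i,j}$). *)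

From HB Require Import structures.
From mathcomp Require Import all_boot all_order all_algebra.
From mathcomp Require Import all_classical all_reals all_analysis.
From mathcomp Require Import mxtens complex.

Set Implicit Arguments.
Unset Strict Implicit.
Unset Printing Implicit Defensive.

Import Order.TTheory GRing.Theory Num.Theory.
Import numFieldNormedType.Exports.
Local Open Scope ring_scope.

Section SymKron.
Variable R : realType.

Definition tri (k : nat) : nat := (k * k.+1)./2.

(* 0-based position of the pair (r,c), r <= c, in the enumeration
   (0,0),...,(0,k-1),(1,1),...,(1,k-1),...,(k-1,k-1). *)
Definition tri_index (k r c : nat) : nat := (\sum_(s < r) (k - s) + (c - r))%N.

Definition pair_of (k : nat) (l : 'I_(tri k)) : option ('I_k * 'I_k) :=
  [pick rc : 'I_k * 'I_k | (rc.1 <= rc.2)%N && (tri_index k rc.1 rc.2 == l)].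

Definition Emx (k : nat) (l : 'I_(tri k)) : 'M[R]_k :=
  match pair_of l with
  | Some rc => if rc.1 == rc.2 then delta_mx rc.1 rc.1
               else (Num.sqrt 2 / 2) *: (delta_mx rc.1 rc.2 + delta_mx rc.2 rc.1)
  | None => 0
  end.

(* column-stacking vec : entry at position j*p + i is A i j *)
Definition vecmx (p q : nat) (A : 'M[R]_(p, q)) : 'cV[R]_(q * p) :=
  \col_s A (mxtens_unindex s).2 (mxtens_unindex s).1.

Definition Wmx (k : nat) : 'M[R]_(tri k, k * k) :=
  \matrix_(l < tri k) (vecmx (Emx l))^T.

Definition skron (p q : nat) (A B : 'M[R]_(p, q)) : 'M[R]_(tri p, tri q) :=
  Wmx p *m (A *t B) *m (Wmx q)^T.

(* a^T (x)_s b^T = (a (x) b)^T W_q^T *)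
Definition skron_row (q : nat) (a b : 'cV[R]_q) : 'rV[R]_(tri q) :=
  (a *t b)^T *m (Wmx q)^T.

Definition svec (k : nat) (P : 'M[R]_k) : 'cV[R]_(tri k) := Wmx k *m vecmx P.

Definition tprev (l : nat) (t : 'I_l.+1 -> R) (r : 'I_l) : R := t (widen_ord (leqnSn l) r).
Definition tnext (l : nat) (t : 'I_l.+1 -> R) (r : 'I_l) : R := t (lift ord0 r).

Definition deltamx (l k : nat) (t : 'I_l.+1 -> R) (x y : R -> 'cV[R]_k)
  : 'M[R]_(l, tri k) :=
  \matrix_(r < l) skron_row (x (tnext t r) + y (tprev t r)) (x (tnext t r) - y (tprev t r)).

Definition Iint (l k : nat) (t : 'I_l.+1 -> R) (x y : R -> 'cV[R]_k)
  : 'M[R]_(l, tri k) :=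
  \matrix_(r, c) Rintegral lebesgue_measure `[tprev t r, tnext t r]%classic
                   (fun tau => skron_row (x tau) (y tau) 0 c).

Definition dEIRL_A (l k : nat) (t : 'I_l.+1 -> R) (xj gu w : R -> 'cV[R]_k)
  (BK : 'M[R]_k) : 'M[R]_(l, tri k) :=
  deltamx t xj xj
  - 2 *: (Iint t xj xj *m (skron 1%:M BK)^T + Iint t xj gu + Iint t xj w).

Definition dEIRL_b (l k : nat) (t : 'I_l.+1 -> R) (xj : R -> 'cV[R]_k)
  (Qi : 'M[R]_k) : 'cV[R]_l :=
  - (Iint t xj xj *m svec Qi).

Definition symmx (k : nat) (P : 'M[R]_k) : Prop := P^T = P.
Definition posdef (k : nat) (P : 'M[R]_k) : Prop :=
  symmx P /\ forall v : 'cV[R]_k, v != 0 -> 0 < (v^T *m P *m v) 0 0.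
Definition psd (k : nat) (P : 'M[R]_k) : Prop :=
  symmx P /\ forall v : 'cV[R]_k, 0 <= (v^T *m P *m v) 0 0.

Definition hurwitz (k : nat) (M : 'M[R]_k) : Prop :=
  forall z : R[i], eigenvalue (map_mx (fun r : R => (r%:C)%C) M) z -> Re z < 0.

Definition sq_int (k : nat) (a b : R) (h : R -> 'cV[R]_k) : Prop :=
  forall i : 'I_k,
    measurable_fun `[a, b]%classic (fun tau => h tau i 0) /\
    lebesgue_measure.-integrable `[a, b]%classic (fun tau => ((h tau i 0) ^+ 2)%:E).

End SymKron.

From HB Require Import structures.
From mathcomp Require Import all_boot all_order all_algebra.
From mathcomp Require Import all_classical all_reals all_analysis.
From mathcomp Require Import mxtens complex measurable_realfun.
From mathcomp Require Import zify ring lra.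

Set Implicit Arguments.
Unset Strict Implicit.
Unset Printing Implicit Defensive.

Import Order.TTheory GRing.Theory Num.Theory.
Import numFieldNormedType.Exports.
Local Open Scope classical_set_scope.
Local Open Scope ring_scope.

(* The matrix [W^T *m W = (1 + T) / 2],
   T the commutation matrix, is the orthogonal projector onto the vectorized
   symmetric matrices: it commutes with every [S *t S] and fixes the columns of
   [W^T].  Hence [skron_row (S a) (S b) = skron_row a b *m (skron S S)^T], and by
   linearity of the integral modulating the data by [S_j] multiplies the
   regression matrix by [(skron S_j S_j)^T]; the controller term transforms the
   same way because [S_j] intertwines the two closed-loop gains.  The projector
   also gives [(skron S S)^T *m svec X = svec (S^T X S)] for symmetric X, so
   [(skron S_j S_j)^T *m svec (S_j^-T P S_j^-1) = svec P]: the vector [b] is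
   unchanged and the two regressions have the same symmetric solutions. *)

Definition tri_offset (k r : nat) : nat := (\sum_(s < r) (k - s))%N.

Lemma tri_offsetS k r : tri_offset k r.+1 = (tri_offset k r + (k - r))%N.
Proof. by rewrite /tri_offset big_ord_recr. Qed.

Lemma tri_offset_homo k : {homo tri_offset k : a b / (a <= b)%N}.
Proof. by apply: homo_leq => // [a b c|a]; [exact: leq_trans|rewrite tri_offsetS leq_addr]. Qed.

Lemma triE k : tri k = tri_offset k k.
Proof.
rewrite /tri; suff -> : (k * k.+1 = (tri_offset k k).*2)%N by rewrite doubleK.
elim: k => [|k IH]; first by rewrite /tri_offset big_ord0.
have -> : tri_offset k.+1 k.+1 = (k.+1 + tri_offset k k)%N.
  by rewrite /tri_offset big_ord_recl.
rewrite doubleD -IH; lia.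
Qed.

Lemma tri_index_lt k r c : (r <= c < k)%N -> (tri_index k r c < tri k)%N.
Proof.
case/andP=> rc ck; rewrite triE.
have := tri_offsetS k r; have := @tri_offset_homo k r.+1 k (leq_ltn_trans rc ck).
rewrite /tri_index -/(tri_offset k r); lia.
Qed.

Lemma tri_index_inj k r1 c1 r2 c2 : (r1 <= c1 < k)%N -> (r2 <= c2 < k)%N ->
  tri_index k r1 c1 = tri_index k r2 c2 -> r1 = r2 /\ c1 = c2.
Proof.
rewrite /tri_index -!/(tri_offset k _).
wlog lt12 : r1 c1 r2 c2 / (r1 <= r2)%N => [hw h1 h2 e|].
  case: (leqP r1 r2) => [le|/ltnW le]; first exact: hw.
  by have [-> ->] := hw _ _ _ _ le h2 h1 (esym e).
move=> /andP[h1 h2] /andP[h3 h4] e.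
case: (ltnP r1 r2) => [lt|le].
  have := tri_offsetS k r1; have := tri_offset_homo k lt; lia.
have r12 : r1 = r2 by apply/eqP; rewrite eqn_leq lt12.
by subst r2; split; lia.
Qed.

Section PairEnumeration.
Variable k : nat.

Lemma pair_ofP (l : 'I_(tri k)) (rc : 'I_k * 'I_k) :
  (pair_of l == Some rc) = (rc.1 <= rc.2)%N && (tri_index k rc.1 rc.2 == l).
Proof.
rewrite /pair_of; case: pickP => [[r' c'] /= /andP[le' /eqP e']|/(_ rc) -> //].
apply/eqP/andP => [[<-]|[le /eqP e]]; first by rewrite le' e'.
have [/val_inj -> /val_inj ->] : r' = rc.1 :> nat /\ c' = rc.2 :> nat.
  by apply: (tri_index_inj (k := k)); rewrite ?le' ?le ?ltn_ord ?e' ?e.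
by case: rc {le e}.
Qed.

(* [pair_of] never returns [None]; assuming [G None = 0] spares proving that
   [tri_index] is onto. *)
Lemma big_pair_of (V : nmodType) (G : option ('I_k * 'I_k) -> V) : G None = 0 ->
  \sum_(l < tri k) G (pair_of l) = \sum_(rc : 'I_k * 'I_k | (rc.1 <= rc.2)%N) G (Some rc).
Proof.
move=> G0.
transitivity (\sum_(l < tri k) \sum_(rc : 'I_k * 'I_k | (rc.1 <= rc.2)%N && (tri_index k rc.1 rc.2 == l))
                G (Some rc)).
  apply: eq_bigr => l _; case E: (pair_of l) => [rc|].
    by rewrite (big_pred1 rc) // => rc'; rewrite -pair_ofP E; apply/eqP/eqP => [[->]|->].
  by rewrite big_pred0 // => rc'; rewrite -pair_ofP E.
rewrite (exchange_big_dep (fun rc : 'I_k * 'I_k => (rc.1 <= rc.2)%N)) /=; last by move=> ? ? _ /andP[].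
apply: eq_bigr => rc le.
have lt : (tri_index k rc.1 rc.2 < tri k)%N by rewrite tri_index_lt ?le ?ltn_ord.
by rewrite (big_pred1 (Ordinal lt)) // => l; rewrite le eq_sym.
Qed.

End PairEnumeration.

Section Gram.
Variables (R : realType) (k : nat).

Definition Epair (o : option ('I_k * 'I_k)) : 'M[R]_k :=
  match o with
  | Some rc => if rc.1 == rc.2 then delta_mx rc.1 rc.1
               else (Num.sqrt 2 / 2) *: (delta_mx rc.1 rc.2 + delta_mx rc.2 rc.1)
  | None => 0
  end.

Lemma EmxE (l : 'I_(tri k)) : Emx R l = Epair (pair_of l).
Proof. by []. Qed.

Lemma Epair_sym o i j : Epair o i j = Epair o j i.
Proof.
case: o => [[r c]|]; rewrite /Epair ?mxE //=.
by case: eqP => _; rewrite !mxE ?[(j == _) && _]andbC // addrC.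
Qed.

Lemma Epair_support (r c i j : 'I_k) : (r <= c)%N -> (i <= j)%N ->
  Epair (Some (r, c)) i j != 0 -> (r, c) = (i, j).
Proof.
move=> rc ij; rewrite /Epair /=.
case: (eqVneq r c) => [<-|neq]; rewrite !mxE.
  by case: (eqVneq i r) => [->|]; case: (eqVneq j r) => [->|]; rewrite ?eqxx.
have -> : (i == c) && (j == r) = false.
  by apply/andP => -[/eqP ic /eqP jr]; subst i j; move: neq; rewrite -val_eqE eqn_leq rc ij.
by case: (eqVneq i r) => [->|]; case: (eqVneq j c) => [->|]; rewrite ?andbF ?addr0 ?mulr0 ?eqxx.
Qed.

Lemma sum_Emx_mul (i1 j1 i2 j2 : 'I_k) :
  \sum_(l < tri k) Emx R l i1 j1 * Emx R l i2 j2 =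
  2^-1 * (((i1 == i2) && (j1 == j2))%:R + ((i1 == j2) && (j1 == i2))%:R).
Proof.
wlog ij : i1 j1 / (i1 <= j1)%N => [hw|].
  case: (leqP i1 j1) => [/hw //|/ltnW /hw swapped].
  rewrite (eq_bigr (fun l => Emx R l j1 i1 * Emx R l i2 j2)) => [|l _]; last first.
    by rewrite !EmxE Epair_sym.
  by rewrite swapped [in LHS]addrC (andbC (j1 == j2)) (andbC (j1 == i2)).
under eq_bigr do rewrite !EmxE.
rewrite (@big_pair_of _ _ (fun o => Epair o i1 j1 * Epair o i2 j2)) ?mxE ?mul0r //.
rewrite (bigD1 (i1, j1)) //= big1 ?addr0 => [|[r c] /= /andP[rc ne]]; last first.
  case: (eqVneq (Epair (Some (r, c)) i1 j1) 0) => [->|/(Epair_support rc ij) e].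
    by rewrite mul0r.
  by rewrite e eqxx in ne.
rewrite /Epair /=; case: (eqVneq i1 j1) => [<-|neq]; rewrite !mxE !eqxx /=.
  rewrite mul1r (eq_sym i2) (eq_sym j2) (andbC (i1 == j2)).
  by set b := _%:R; lra.
have sqrt2_half : Num.sqrt (2 : R) / 2 * (Num.sqrt 2 / 2) = 2^-1.
  by rewrite mulrACA -(expr2 (Num.sqrt 2)) sqr_sqrtr ?ler0n // mulrA mulfV ?pnatr_eq0 // mul1r.
rewrite (negbTE neq) eq_sym (negbTE neq) addr0 mulr1 mulrA sqrt2_half.
by rewrite (eq_sym i2 i1) (eq_sym j2 j1) (eq_sym i2 j1) (eq_sym j2 i1) [(j1 == i2) && _]andbC.
Qed.

End Gram.

Lemma sum_mxtens (V : nmodType) m n (F : 'I_(m * n) -> V) :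
  \sum_(s < m * n) F s = \sum_(a < m) \sum_(b < n) F (mxtens_index (a, b)).
Proof.
rewrite pair_big /=; apply: reindex => //=.
by exists (@mxtens_unindex m n) => s _; rewrite ?mxtens_indexK ?mxtens_unindexK //; case: s.
Qed.

Section VecTens.
Variable R : realType.

Lemma tensmx_vecmx m n p q (A : 'M[R]_(m, n)) (B : 'M[R]_(p, q)) (X : 'M[R]_(q, n)) :
  (A *t B) *m vecmx X = vecmx (B *m X *m A^T).
Proof.
apply/matrixP => s c; rewrite !mxE.
case: (mxtens_indexP s) => i j; rewrite mxtens_indexK /= sum_mxtens.
apply: eq_bigr => a _; rewrite !mxE mulr_suml; apply: eq_bigr => b _.
by rewrite !mxE !mxtens_indexK /=; ring.
Qed.

End VecTens.

Section SymmetricProjector.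
Variables (R : realType) (k : nat).
Local Notation W := (Wmx R k).

Definition swap_index (s : 'I_(k * k)) : 'I_(k * k) :=
  mxtens_index ((mxtens_unindex s).2, (mxtens_unindex s).1).

Lemma swap_indexE i j : swap_index (mxtens_index (i, j)) = mxtens_index (j, i).
Proof. by rewrite /swap_index mxtens_indexK. Qed.

Lemma swap_indexK : involutive swap_index.
Proof. by move=> s; case: (mxtens_indexP s) => i j; rewrite !swap_indexE. Qed.

Definition commmx : 'M[R]_(k * k) := \matrix_(s, s') (s' == swap_index s)%:R.

Lemma commmx_mul n (M : 'M[R]_(k * k, n)) : commmx *m M = \matrix_(s, c) M (swap_index s) c.
Proof.
apply/matrixP => s c; rewrite !mxE (bigD1 (swap_index s)) //= mxE eqxx mul1r big1 ?addr0 //.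
by move=> s' /negbTE ns; rewrite mxE ns mul0r.
Qed.

Lemma mul_commmx n (M : 'M[R]_(n, k * k)) : M *m commmx = \matrix_(c, s) M c (swap_index s).
Proof.
apply/matrixP => c s; rewrite !mxE (bigD1 (swap_index s)) //= mxE swap_indexK eqxx mulr1.
rewrite big1 ?addr0 // => s' ns; rewrite mxE.
by rewrite (_ : (s == _) = false) ?mulr0 //; apply: contraNF ns => /eqP ->; rewrite swap_indexK.
Qed.

Lemma commmx_tens (A B : 'M[R]_k) : commmx *m (A *t B) = (B *t A) *m commmx.
Proof.
rewrite commmx_mul mul_commmx; apply/matrixP => s s'; rewrite !mxE.
case: (mxtens_indexP s) => a b; case: (mxtens_indexP s') => a' b'.
by rewrite !swap_indexE !mxtens_indexK /= mulrC.
Qed.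

Lemma commmx_vecmx (X : 'M[R]_k) : commmx *m vecmx X = vecmx X^T.
Proof.
rewrite commmx_mul; apply/matrixP => s c; rewrite !mxE.
by case: (mxtens_indexP s) => a b; rewrite swap_indexE !mxtens_indexK.
Qed.

Lemma commmx_trWmx : commmx *m W^T = W^T.
Proof.
rewrite commmx_mul; apply/matrixP => s l; rewrite !mxE.
by case: (mxtens_indexP s) => a b; rewrite swap_indexE !mxtens_indexK /= !EmxE Epair_sym.
Qed.

Definition symproj : 'M[R]_(k * k) := W^T *m W.

Lemma symprojE : symproj = 2^-1 *: (1%:M + commmx).
Proof.
apply/matrixP => s s'; rewrite !mxE.
under eq_bigr do rewrite !mxE.
case: (mxtens_indexP s) => a b; case: (mxtens_indexP s') => a' b'.
rewrite !mxtens_indexK /= sum_Emx_mul swap_indexE !(can_eq (@mxtens_indexK k k)) !xpair_eqE.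
by rewrite andbC (eq_sym a') (eq_sym b').
Qed.

Lemma symproj_fix n (M : 'M[R]_(k * k, n)) : commmx *m M = M -> symproj *m M = M.
Proof.
move=> TM; rewrite symprojE -scalemxAl mulmxDl mul1mx TM -mulr2n.
by rewrite -scalerMnr scalerMnl -mulr_natr mulVf ?pnatr_eq0 // scale1r.
Qed.

Lemma symproj_trWmx : symproj *m W^T = W^T.
Proof. exact/symproj_fix/commmx_trWmx. Qed.

Lemma Wmx_symproj : W *m symproj = W.
Proof. by apply: trmx_inj; rewrite trmx_mul /symproj trmx_mul trmxK symproj_trWmx. Qed.

Lemma symproj_vecmx (X : 'M[R]_k) : X^T = X -> symproj *m vecmx X = vecmx X.
Proof. by move=> symX; apply: symproj_fix; rewrite commmx_vecmx symX. Qed.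

Lemma symproj_tens (A : 'M[R]_k) : symproj *m (A *t A) = (A *t A) *m symproj.
Proof.
by rewrite symprojE -scalemxAl -scalemxAr mulmxDl mulmxDr mul1mx mulmx1 commmx_tens.
Qed.

End SymmetricProjector.

Section SymKronecker.
Variables (R : realType) (k : nat).
Local Notation W := (Wmx R k).

Lemma skron_row_mulmx (A : 'M[R]_k) (a b : 'cV[R]_k) :
  skron_row (A *m a) (A *m b) = skron_row a b *m (skron A A)^T.
Proof.
rewrite /skron_row /skron -tensmx_mul !trmx_mul !trmxK !trmx_tens -!mulmxA.
congr (_ *m _).
by rewrite [W^T *m _]mulmxA -/(symproj R k) mulmxA symproj_tens -mulmxA symproj_trWmx.
Qed.

Lemma skron_mul_sq (A B C : 'M[R]_k) :
  skron A B *m skron C C = skron (A *m C) (B *m C).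
Proof.
rewrite /skron -!mulmxA [W^T *m _]mulmxA -/(symproj R k) [symproj R k *m _]mulmxA.
by rewrite symproj_tens -mulmxA symproj_trWmx [_ *t _ *m _]mulmxA tensmx_mul.
Qed.

Lemma skron_sq_mul (A B C : 'M[R]_k) :
  skron C C *m skron A B = skron (C *m A) (C *m B).
Proof.
rewrite /skron -!mulmxA [W^T *m _]mulmxA -/(symproj R k) [C *t C *m _]mulmxA.
rewrite -symproj_tens -mulmxA [W *m _]mulmxA Wmx_symproj.
by rewrite [C *t C *m _]mulmxA tensmx_mul.
Qed.

Lemma trskron_svec (S X : 'M[R]_k) : X^T = X ->
  (skron S S)^T *m svec X = svec (S^T *m X *m S).
Proof.
move=> symX; rewrite /skron /svec !trmx_mul trmxK trmx_tens -!mulmxA.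
by rewrite [W^T *m _]mulmxA -/(symproj R k) symproj_vecmx // tensmx_vecmx trmxK mulmxA.
Qed.

Lemma trskron_svec_conj (S X : 'M[R]_k) : S \in unitmx -> X^T = X ->
  (skron S S)^T *m svec ((invmx S)^T *m X *m invmx S) = svec X.
Proof.
move=> unitS symX; rewrite trskron_svec; last by rewrite !trmx_mul trmxK symX mulmxA.
by rewrite trmx_inv !mulmxA mulmxV ?unitmx_tr // mul1mx mulmxKV.
Qed.

End SymKronecker.

Section RintegralMatrix.
Context d (T : measurableType d) (R : realType) (mu : {measure set T -> \bar R}).
Variables (D : set T) (mD : measurable D).

Lemma integrable_sum_EFin (I : Type) (s : seq I) (G : I -> T -> R) :
  (forall i, mu.-integrable D (EFin \o G i)) ->
  mu.-integrable D (EFin \o (fun x => \sum_(i <- s) G i x)).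
Proof.
move=> intG; apply: (eq_integrable mD _ _ _ (integrable_sum mD s (P := xpredT) (fun i _ => intG i))).
by move=> x _; rewrite /= sumEFin.
Qed.

Lemma Rintegral_sum (I : Type) (s : seq I) (G : I -> T -> R) :
  (forall i, mu.-integrable D (EFin \o G i)) ->
  \int[mu]_(x in D) (\sum_(i <- s) G i x) = \sum_(i <- s) \int[mu]_(x in D) G i x.
Proof.
move=> intG; elim: s => [|i s IH].
  by under eq_Rintegral do rewrite big_nil; rewrite Rintegral_cst // mul0r big_nil.
under eq_Rintegral do rewrite big_cons.
by rewrite RintegralD ?IH ?big_cons //; exact: integrable_sum_EFin.
Qed.

Lemma integrable_mulr_cst (f : T -> R) (a : R) :
  mu.-integrable D (EFin \o f) -> mu.-integrable D (EFin \o (fun x => f x * a)).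
Proof.
move=> intf; apply: (eq_integrable mD _ _ _ (integrableZr mD a intf)).
by move=> x _; rewrite /= EFinM.
Qed.

Lemma integrable_mulmx m n p (F : T -> 'M[R]_(m, n)) (C : 'M[R]_(n, p)) :
  (forall i j, mu.-integrable D (EFin \o (fun x => F x i j))) ->
  forall i c, mu.-integrable D (EFin \o (fun x => (F x *m C) i c)).
Proof.
move=> intF i c; under eq_fun do rewrite mxE.
by apply: integrable_sum_EFin => j; apply: integrable_mulr_cst.
Qed.

Lemma Rintegral_mulmx m n p (F : T -> 'M[R]_(m, n)) (C : 'M[R]_(n, p)) :
  (forall i j, mu.-integrable D (EFin \o (fun x => F x i j))) ->
  forall i c, \int[mu]_(x in D) (F x *m C) i c = \sum_j (\int[mu]_(x in D) F x i j) * C j c.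
Proof.
move=> intF i c; under eq_Rintegral do rewrite mxE.
rewrite Rintegral_sum => [|j]; last exact: integrable_mulr_cst.
by apply: eq_bigr => j _; rewrite RintegralZr.
Qed.

Lemma integrable_mul_sq (f g : T -> R) :
  measurable_fun D f -> mu.-integrable D (fun x => (f x ^+ 2)%:E) ->
  measurable_fun D g -> mu.-integrable D (fun x => (g x ^+ 2)%:E) ->
  mu.-integrable D (EFin \o (fun x => f x * g x)).
Proof.
move=> mf intf2 mg intg2.
apply: le_integrable mD _ _ _ _ (integrableD mD intf2 intg2).
  exact/measurable_EFinP/measurable_funM.
move=> x _; have sq_ge0 : 0 <= f x ^+ 2 + g x ^+ 2 by rewrite addr_ge0 ?sqr_ge0.
by rewrite /= lee_fin (ger0_norm sq_ge0) ler_norml; apply/andP; split; nra.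
Qed.

End RintegralMatrix.

Lemma mxdiag_unitmx (R : comUnitRingType) (N : nat) (p : 'I_N -> nat)
    (S : forall i, 'M[R]_(p i)) :
  (forall i, S i \in unitmx) -> mxdiag S \in unitmx.
Proof.
move=> unitS; pose Sinv := mxdiag (fun i => invmx (S i)).
have SinvK m (X : 'M[R]_(\sum_i p i, m)) : Sinv *m (mxdiag S *m X) = X.
  rewrite -[X in mxdiag S *m X]submxcolK !mul_mxdiag_mxcol -[RHS]submxcolK.
  by apply: eq_mxcol => i; rewrite mulmxA mulVmx ?mul1mx.
have : Sinv *m mxdiag S = 1%:M by rewrite -[mxdiag S]mulmx1 SinvK.
by case/mulmx1_unit.
Qed.

Section Regression.
Variable R : realType.
Local Notation mu := (@lebesgue_measure R).

Definition sample_integrable l k (t : 'I_l.+1 -> R) (a b : R -> 'cV[R]_k) : Prop :=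
  forall (r : 'I_l) (i j : 'I_k),
    mu.-integrable `[tprev t r, tnext t r] (EFin \o (fun x => a x i 0 * b x j 0)).

Lemma Iint_mulmx_skron l k (t : 'I_l.+1 -> R) (S : 'M[R]_k) (a b : R -> 'cV[R]_k) :
  sample_integrable t a b ->
  Iint t (fun x => S *m a x) (fun x => S *m b x) = Iint t a b *m (skron S S)^T.
Proof.
move=> intab; apply/matrixP => r c; rewrite !mxE.
under eq_Rintegral do rewrite skron_row_mulmx.
have int_tens s : mu.-integrable `[tprev t r, tnext t r]
    (EFin \o (fun x => (a x *t b x)^T ord0 s)).
  case: (mxtens_indexP s) => i j.
  apply: (eq_integrable _ _ _ _ (intab r i j)) => // x _ /=.
  by rewrite !mxE mxtens_indexK /= !(ord1 (Ordinal _)).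
have int_row i j : mu.-integrable `[tprev t r, tnext t r]
    (EFin \o (fun x => skron_row (a x) (b x) i j)).
  by rewrite (ord1 i); apply: integrable_mulmx => // i' s; rewrite (ord1 i').
rewrite Rintegral_mulmx //.
by apply: eq_bigr => j _; rewrite /Iint !mxE.
Qed.

Lemma deltamx_mulmx_skron l k (t : 'I_l.+1 -> R) (S : 'M[R]_k) (a : R -> 'cV[R]_k) :
  deltamx t (fun x => S *m a x) (fun x => S *m a x) = deltamx t a a *m (skron S S)^T.
Proof.
apply/matrixP => r c; rewrite mxE [RHS]mxE -mulmxDr -mulmxBr skron_row_mulmx mxE.
by apply: eq_bigr => j _; rewrite !mxE.
Qed.

Lemma sample_times_homo l (t : 'I_l.+1 -> R) : (forall r : 'I_l, tprev t r < tnext t r) ->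
  {homo t : i j / (i <= j)%N >-> i <= j}.
Proof.
move=> incr i j ij.
have homo : {in [pred n | (n <= l)%N] &,
    {homo (fun n => t (inord n)) : m n / (m <= n)%N >-> m <= n}}.
  apply: homo_leq_in => //=.
  - by move=> y x z; apply: le_trans.
  - by move=> m n _; rewrite !inE => nl p /andP[_ /ltnW /leq_trans]; apply.
  move=> n _; rewrite inE => nl.
  have -> : inord n = widen_ord (leqnSn l) (Ordinal nl).
    by apply: val_inj; rewrite /= inordK // ltnW.
  have -> : inord n.+1 = lift ord0 (Ordinal nl) by apply: val_inj; rewrite /= inordK.
  exact/ltW/incr.
have inD (m : 'I_l.+1) : val m \in [pred n | (n <= l)%N] by rewrite inE /= -ltnS ltn_ord.
by rewrite -(inord_val i) -(inord_val j) homo ?inD.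
Qed.

Lemma sample_itv_sub l (t : 'I_l.+1 -> R) : (forall r : 'I_l, tprev t r < tnext t r) ->
  forall r : 'I_l, `[tprev t r, tnext t r] `<=` `[t ord0, t ord_max].
Proof.
move=> incr r x /=; rewrite !in_itv /= => /andP[tx xt].
by rewrite (le_trans _ tx) ?(le_trans xt) // sample_times_homo // -ltnS.
Qed.

Lemma sq_int_sample_integrable l k (t : 'I_l.+1 -> R) (a b : R -> 'cV[R]_k) :
  (forall r : 'I_l, tprev t r < tnext t r) ->
  sq_int (t ord0) (t ord_max) a -> sq_int (t ord0) (t ord_max) b ->
  sample_integrable t a b.
Proof.
move=> incr sqa sqb r i j; have [ma inta] := sqa i; have [mb intb] := sqb j.
apply: (@integrableS _ _ _ mu `[t ord0, t ord_max]%classic _ _ (measurable_itv _)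
  (measurable_itv _) (sample_itv_sub (r := r) incr)).
by apply: integrable_mul_sq => //; exact: measurable_itv.
Qed.

Lemma sq_int_submxcol (N : nat) (nd : 'I_N -> nat) (a b : R)
    (x : R -> 'cV[R]_(\sum_(k < N) nd k)) (j : 'I_N) :
  sq_int a b x -> sq_int a b (fun tau => submxcol (x tau) j).
Proof.
move=> sqx i; have [mx intx] := sqx (tagnat.Rank j i).
have entry tau : x tau (tagnat.Rank j i) 0 = submxcol (x tau) j i 0 by rewrite mxE.
split; first by apply: eq_measurable_fun mx => tau _; rewrite entry.
by apply: (eq_integrable _ _ _ _ intx) => [|tau _]; rewrite ?entry //; exact: measurable_itv.
Qed.

Lemma dEIRL_A_mulmx l k (t : 'I_l.+1 -> R) (S : 'M[R]_k) (a gu w : R -> 'cV[R]_k)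
    (BK BK' : 'M[R]_k) :
  sample_integrable t a a -> sample_integrable t a gu -> sample_integrable t a w ->
  BK' *m S = S *m BK ->
  dEIRL_A t (fun x => S *m a x) (fun x => S *m gu x) (fun x => S *m w x) BK'
    = dEIRL_A t a gu w BK *m (skron S S)^T.
Proof.
move=> intaa intag intaw BKS.
have comm : (skron S S)^T *m (skron 1%:M BK')^T = (skron 1%:M BK)^T *m (skron S S)^T.
  by rewrite -!trmx_mul skron_mul_sq skron_sq_mul mul1mx mulmx1 BKS.
rewrite /dEIRL_A deltamx_mulmx_skron !Iint_mulmx_skron // -mulmxA comm.
by rewrite mulmxBl -scalemxAl !mulmxDl !mulmxA.
Qed.

Lemma dEIRL_b_mulmx l k (t : 'I_l.+1 -> R) (S Q : 'M[R]_k) (a : R -> 'cV[R]_k) :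
  S \in unitmx -> Q^T = Q -> sample_integrable t a a ->
  dEIRL_b t (fun x => S *m a x) ((invmx S)^T *m Q *m invmx S) = dEIRL_b t a Q.
Proof.
by move=> unitS symQ intaa; rewrite /dEIRL_b Iint_mulmx_skron // -mulmxA trskron_svec_conj.
Qed.

End Regression.

Theorem theorem4
  (R : realType) (N : nat) (nd md : 'I_N -> nat)
  (* system  xdot = f(x) + g(x) u,  x in R^n (n = sum n_j),  u in R^m (m = sum m_j) *)
  (f : 'cV[R]_(\sum_(k < N) nd k) -> 'cV[R]_(\sum_(k < N) nd k))
  (g : 'cV[R]_(\sum_(k < N) nd k) -> 'M[R]_(\sum_(k < N) nd k, \sum_(k < N) md k))
  (Hf0 : f 0 = 0)
  (Hlip : exists Kset : set 'cV[R]_(\sum_(k < N) nd k),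
      compact Kset /\ nbhs (0 : 'cV[R]_(\sum_(k < N) nd k)) Kset /\
      exists L : R, forall y z, Kset y -> Kset z ->
        `|f y - f z| <= L * `|y - z| /\ `|g y - g z| <= L * `|y - z|)
  (* linearization (A, B) at the origin *)
  (A : 'M[R]_(\sum_(k < N) nd k)) (B : 'M[R]_(\sum_(k < N) nd k, \sum_(k < N) md k))
  (HA : differentiable f 0 /\ ('d f 0 = mulmx A :> (_ -> _)))
  (HB : B = g 0)
  (* loop j, cost matrices, controller *)
  (j : 'I_N) (Qj : 'M[R]_(nd j)) (Rj : 'M[R]_(md j))
  (HQ : psd Qj) (HR : posdef Rj)
  (K : 'M[R]_(md j, nd j))
  (HK : hurwitz (submxblock A j j - submxblock B j j *m K))
  (* sample times *)
  (l : nat) (t : 'I_l.+1 -> R)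
  (Ht : forall r : 'I_l, tprev t r < tnext t r)
  (* state-input trajectory on [t_0, t_l] *)
  (x : R -> 'cV[R]_(\sum_(k < N) nd k)) (u : R -> 'cV[R]_(\sum_(k < N) md k))
  (Hxc : {within `[t ord0, t ord_max]%classic, continuous x})
  (Hode : forall tau, t ord0 < tau < t ord_max ->
      is_derive tau 1 x (f (x tau) + g (x tau) *m u tau))
  (Hsx : sq_int (t ord0) (t ord_max) x)
  (Hsu : sq_int (t ord0) (t ord_max) u)
  (Hsgu : sq_int (t ord0) (t ord_max)
            (fun tau => submxcol (g (x tau)) j *m u tau))
  (Hsw : sq_int (t ord0) (t ord_max)
            (fun tau => submxcol (f (x tau)) j - submxblock A j j *m submxcol (x tau) j))
  (* modulation S = diag(S_1, ..., S_N) *)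
  (S : forall k : 'I_N, 'M[R]_(nd k)) (HS : forall k, S k \in unitmx)
  (P : 'M[R]_(nd j)) (HP : posdef P) :
  let Ajj := submxblock A j j in
  let Bjj := submxblock B j j in
  let Qij := Qj + K^T *m Rj *m K in
  (* dEIRL data *)
  let xj := fun tau => submxcol (x tau) j in
  let gu := fun tau => submxcol (g (x tau)) j *m u tau in
  let w := fun tau => submxcol (f (x tau)) j - Ajj *m xj tau in
  let Areg := dEIRL_A t xj gu w (Bjj *m K) in
  let breg := dEIRL_b t xj Qij in
  (* modulated quantities *)
  let Sf := mxdiag S in
  let Sj := S j in
  let tx := fun tau => Sf *m x tau in
  let txj := fun tau => Sj *m xj tau in
  let tf := fun z => Sj *m submxcol (f (invmx Sf *m z)) j in
  let tg := fun z => Sj *m submxcol (g (invmx Sf *m z)) j in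
  let tA := Sj *m Ajj *m invmx Sj in
  let tB := Sj *m Bjj in
  let tQ := (invmx Sj)^T *m Qj *m invmx Sj in
  let tK := K *m invmx Sj in
  let tQi := tQ + tK^T *m Rj *m tK in
  let tw := fun tau => tf (tx tau) - tA *m txj tau in
  let tgu := fun tau => tg (tx tau) *m u tau in
  let tAreg := dEIRL_A t txj tgu tw (tB *m tK) in
  let tbreg := dEIRL_b t txj tQi in
  let tP := (invmx Sj)^T *m P *m invmx Sj in
  (Areg *m svec P = breg <-> tAreg *m svec tP = tbreg) /\
  tAreg = Areg *m (skron Sj Sj)^T /\
  tbreg = breg.
Proof.
move=> Ajj Bjj Qij xj gu w Areg breg Sf Sj tx txj tf tg tA tB tQ tK tQi tw tgu tAreg tbreg tP.
have unitSj : Sj \in unitmx := HS j.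
have txK tau : invmx Sf *m tx tau = x tau by rewrite mulKmx // mxdiag_unitmx.
have tguE : tgu = (fun tau => Sj *m gu tau).
  by apply: funext => tau; rewrite /tgu /tg txK mulmxA.
have twE : tw = (fun tau => Sj *m w tau).
  by apply: funext => tau; rewrite /tw /tf txK /tA /txj /w mulmxBr !mulmxA mulmxKV.
have sqxj : sq_int (t ord0) (t ord_max) xj := sq_int_submxcol Hsx.
have int_xx := sq_int_sample_integrable Ht sqxj sqxj.
have BKS : tB *m tK *m Sj = Sj *m (Bjj *m K) by rewrite /tB /tK !mulmxA mulmxKV.
have symQ : Qij^T = Qij.
  by rewrite /Qij linearD /= !trmx_mul trmxK HQ.1 HR.1 mulmxA.
have tQiE : tQi = (invmx Sj)^T *m Qij *m invmx Sj.
  by rewrite /tQi /tQ /tK /Qij mulmxDr mulmxDl trmx_mul !mulmxA.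
have tAregE : tAreg = Areg *m (skron Sj Sj)^T.
  by rewrite /tAreg tguE twE; apply: dEIRL_A_mulmx => //; apply: sq_int_sample_integrable.
have tbregE : tbreg = breg by rewrite /tbreg tQiE dEIRL_b_mulmx.
split=> //; rewrite tAregE tbregE -mulmxA trskron_svec_conj //; exact: HP.1.
Qed.
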